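(* Let $n\in\mathbb{N}_0$. For each $\mathrm{Z}\in\{\mathrm{I},\mathrm{II},\mathrm{III}\}$, the system $(\gamma^{\mathrm{Z}}b_{n,k})_{k=0}^n$ is a basis of $\mathbb{P}_n([0,1])$ (polynomials of degree $\le n$ on $[0,1]$).
   Context: $\widehat T$ is the triangle with vertices $(0,0),(1,0),(0,1)$. $P_m^{(\alpha,\beta)}$ are the Jacobi polynomials (orthogonal on $[-1,1]$ w.r.t. $(1-x)^\alpha(1+x)^\beta$, normalized by $P_m^{(\alpha,\beta)}(1)=(\alpha+1)_m/m!$), and $P_k^{(0,0)}$ the Legendre polynomials. For $0\le k\le n$, $b_{n,k}(x_1,x_2):=(x_1+x_2)^k P^{(0,2k+1)}_{n-k}(2(x_1+x_2)-1)\,P_k^{(0,0)}\!\left(\frac{x_1-x_2}{x_1+x_2}\right)$ (a polynomial of degree $n$). The restriction operators are $\gamma^{\mathrm{I}}u:=u(\cdot,0)$, $\gamma^{\mathrm{II}}u:=u(0,\cdot)$, $\gamma^{\mathrm{III}}u:=u(1-\cdot,\cdot)$, mapping functions on $\widehat T$ to functions on $[0,1]$. *)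

From HB Require Import structures.
From mathcomp Require Import all_boot all_order all_algebra.
Set Implicit Arguments. Unset Strict Implicit. Unset Printing Implicit Defensive.
Import Order.TTheory GRing.Theory Num.Theory.
Local Open Scope ring_scope.

Section Defs.
Variable R : realFieldType.

(* Jacobi polynomial P_m^{(a,b)} for integer parameters a, b >= 0, via the
   classical explicit formula (DLMF 18.5.8):
   P_m^{(a,b)}(x) = sum_{s=0}^m C(m+a, m-s) C(m+b, s) ((x-1)/2)^s ((x+1)/2)^(m-s). *)
Definition jacobi (a b m : nat) : {poly R} :=
  \sum_(s < m.+1)
     ('C(m + a, m - s) * 'C(m + b, s))%:R *:
       ((2^-1 *: ('X - 1)) ^+ s * (2^-1 *: ('X + 1)) ^+ (m - s)).

Definition legendre (k : nat) : {poly R} := jacobi 0 0 k.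

(* Homogenization: (x1+x2)^k p((x1-x2)/(x1+x2)) written as the polynomial
   sum_j p_j (x1-x2)^j (x1+x2)^(k-j)  (for size p <= k+1); it agrees with
   the rational expression whenever x1 + x2 <> 0. *)
Definition homog (k : nat) (p : {poly R}) (x1 x2 : R) : R :=
  \sum_(j < k.+1) p`_j * (x1 - x2) ^+ j * (x1 + x2) ^+ (k - j).

Definition bnk (n k : nat) (x1 x2 : R) : R :=
  (jacobi 0 (2 * k + 1)%N (n - k)).[2 * (x1 + x2) - 1] * homog k (legendre k) x1 x2.

Inductive edge := EI | EII | EIII.

Definition gamma (Z : edge) (u : R -> R -> R) (t : R) : R :=
  match Z with
  | EI => u t 0
  | EII => u 0 t
  | EIII => u (1 - t) t
  end.

Definition inPn01 (n : nat) (f : R -> R) : Prop :=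
  exists p : {poly R}, (size p <= n.+1)%N /\
    forall t, 0 <= t <= 1 -> f t = p.[t].

Definition is_basis_Pn01 (n : nat) (q : 'I_n.+1 -> R -> R) : Prop :=
  (forall k, inPn01 n (q k)) /\
  forall f, inPn01 n f ->
    exists! c : {ffun 'I_n.+1 -> R},
      forall t, 0 <= t <= 1 -> f t = \sum_(k < n.+1) c k * q k t.

End Defs.

From HB Require Import structures.
From mathcomp Require Import all_boot all_order all_algebra.
From mathcomp Require Import ring.
Import Order.TTheory GRing.Theory Num.Theory.
Local Open Scope ring_scope.

(* Restricted to an edge, b_{n,k} is a polynomial of degree at most n, and the
   coefficient matrix of the n+1 restrictions is triangular with nonzero diagonal.
   On the legs x2 = 0 and x1 = 0 the restriction is t^k P_k(+-1) P^(0,2k+1)_(n-k)(2t-1),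
   which vanishes to order exactly k at t = 0 since P_k(+-1) = (+-1)^k and
   P^(0,2k+1)_(n-k)(-1) = (-1)^(n-k) C(n+k+1, n-k).  On the hypotenuse the Jacobi factor
   is P^(0,2k+1)_(n-k)(1) = 1 and the restriction is P_k(1-2t), of degree exactly k.
   As a polynomial vanishing on [0,1] is zero, an invertible coefficient matrix yields
   existence and uniqueness of coordinates for functions on [0,1]. *)

Lemma poly_eq0_on01 (R : numFieldType) (p : {poly R}) :
  (forall t : R, 0 <= t <= 1 -> p.[t] = 0) -> p = 0.
Proof.
move=> p01; pose rs : seq R := [seq i.+1%:R^-1 | i <- iota 0 (size p)].
apply: (@roots_geq_poly_eq0 _ p rs); last by rewrite size_map size_iota.
- apply/allP => _ /mapP [i _ ->]; apply/rootP/p01.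
  by rewrite invr_ge0 ler0n invf_le1 ?ltr0Sn ?ler1n.
- rewrite map_inj_uniq ?iota_uniq // => i j /invr_inj /eqP.
  by rewrite eqr_nat => /eqP [].
Qed.

Lemma size_CMXaddC (R : nzRingType) (a b : R) : a != 0 -> size (a%:P * 'X + b%:P) = 2%N.
Proof. by move=> a0; rewrite size_MXaddC polyC_eq0 (negbTE a0) size_polyC a0. Qed.

Section CoefficientMatrix.
Variables (R : fieldType) (n : nat).

Definition coefmx (p : 'I_n.+1 -> {poly R}) : 'M[R]_n.+1 := \matrix_k poly_rV (p k).

Lemma rVpoly_mul_coefmx (p : 'I_n.+1 -> {poly R}) (c : {ffun 'I_n.+1 -> R}) :
  (forall k, size (p k) <= n.+1)%N ->
  rVpoly (\row_k c k *m coefmx p) = \sum_k c k *: p k.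
Proof.
move=> size_p; rewrite mulmx_sum_row linear_sum; apply: eq_bigr => k _.
by rewrite linearZ /= mxE rowK poly_rV_K.
Qed.

Lemma coefmx_unit_size (p : 'I_n.+1 -> {poly R}) :
  (forall k : 'I_n.+1, size (p k) = k.+1) -> coefmx p \in unitmx.
Proof.
move=> size_p; rewrite unitmxE unitfE det_trig.
  apply/prodf_neq0 => k _; rewrite !mxE.
  by rewrite -[k in _`_k]/(k.+1.-1) -size_p lead_coef_eq0 -size_poly_eq0 size_p.
by apply/is_trig_mxP => i j lt_ij; rewrite !mxE nth_default ?size_p.
Qed.

Lemma coefmx_unit_Xn (r : 'I_n.+1 -> {poly R}) :
  (forall k, (r k)`_0 != 0) -> coefmx (fun k : 'I_n.+1 => 'X^k * r k) \in unitmx.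
Proof.
move=> r0; rewrite unitmxE unitfE -det_tr det_trig.
  by apply/prodf_neq0 => k _; rewrite !mxE coefXnM ltnn subnn.
by apply/is_trig_mxP => i j lt_ij; rewrite !mxE coefXnM lt_ij.
Qed.

End CoefficientMatrix.

Arguments coefmx {R n} p.

Section BasisFromPolynomials.
Variables (R : realFieldType) (n : nat).
Variables (q : 'I_n.+1 -> R -> R) (p : 'I_n.+1 -> {poly R}).
Hypothesis size_p : forall k, (size (p k) <= n.+1)%N.
Hypothesis q_p : forall k t, 0 <= t <= 1 -> q k t = (p k).[t].
Hypothesis unit_p : coefmx p \in unitmx.

Lemma lincomb_on01P (c : {ffun 'I_n.+1 -> R}) (g : {poly R}) :
  (size g <= n.+1)%N ->
  (forall t, 0 <= t <= 1 -> g.[t] = \sum_k c k * q k t) <->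
  \row_k c k = poly_rV g *m invmx (coefmx p).
Proof.
move=> size_g.
have hornerE_c t : 0 <= t <= 1 -> (\sum_k c k *: p k).[t] = \sum_k c k * q k t.
  by move=> t01; rewrite horner_sum; apply: eq_bigr => k _; rewrite hornerZ q_p.
transitivity (\sum_k c k *: p k = g).
  split=> [g_c | <- t t01]; last by rewrite hornerE_c.
  apply/eqP; rewrite -subr_eq0; apply/eqP/poly_eq0_on01 => t t01.
  by rewrite hornerD hornerN hornerE_c // g_c // subrr.
rewrite -rVpoly_mul_coefmx //; split=> [c_g | ->]; last first.
  by rewrite mulmxKV // poly_rV_K.
by rewrite -c_g rVpolyK mulmxK.
Qed.

Lemma is_basis_Pn01_coefmx : is_basis_Pn01 q.
Proof.
split=> [k | f [g [size_g f_g]]].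
  by exists (p k); split=> // t; apply: q_p.
pose c := poly_rV g *m invmx (coefmx p).
have row_c : \row_k [ffun k => c 0 k] k = c.
  by apply/rowP => k; rewrite mxE ffunE.
exists [ffun k => c 0 k]; split=> [t t01 | d f_d].
  by rewrite f_g //; move: t t01; apply/(lincomb_on01P _ _ size_g).
apply/ffunP => k; rewrite ffunE.
have /(lincomb_on01P _ _ size_g) : forall t, 0 <= t <= 1 -> g.[t] = \sum_k d k * q k t.
  by move=> t t01; rewrite -f_g // f_d.
by move=> /rowP /(_ k); rewrite !mxE.
Qed.

End BasisFromPolynomials.

Section Jacobi.
Variable R : realFieldType.

Definition jacobi_term (m s : nat) : {poly R} := ('X - 1%:P) ^+ s * ('X - (-1)%:P) ^+ (m - s).

Lemma jacobi_termE m (s : 'I_m.+1) :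
  (2^-1 *: ('X - 1)) ^+ s * (2^-1 *: ('X + 1)) ^+ (m - s) = (2^-1 : R) ^+ m *: jacobi_term m s.
Proof.
rewrite /jacobi_term polyCN polyC1 opprK.
by rewrite !exprZn -scalerAl -scalerAr scalerA -exprD subnKC // -ltnS.
Qed.

Lemma jacobi_term_monic m s : jacobi_term m s \is monic.
Proof. by rewrite monicMl monic_exp ?monicXsubC. Qed.

Lemma size_jacobi_term m (s : 'I_m.+1) : size (jacobi_term m s) = m.+1.
Proof.
rewrite size_Mmonic ?monic_exp ?monicXsubC ?size_exp_XsubC //.
  by rewrite addSn addnS subnKC // -ltnS.
by rewrite -size_poly_eq0 size_exp_XsubC.
Qed.

Lemma jacobiE a b m :
  jacobi R a b m =
  (2^-1 : R) ^+ m *: \sum_(s < m.+1) ('C(m + a, m - s) * 'C(m + b, s))%:R *: jacobi_term m s.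
Proof.
rewrite /jacobi scaler_sumr; apply: eq_bigr => s _.
by rewrite jacobi_termE scalerA mulrC -scalerA.
Qed.

Lemma size_jacobi a b m : size (jacobi R a b m) = m.+1.
Proof.
rewrite jacobiE size_scale ?expf_neq0 ?invr_eq0 ?pnatr_eq0 //.
set P := \sum_(s < m.+1) _.
have size_P : (size P <= m.+1)%N.
  apply/leq_sizeP => j le_mj; rewrite coef_sum big1 // => s _.
  by rewrite coefZ nth_default ?mulr0 // size_jacobi_term.
have P_m : P`_m = (\sum_(s < m.+1) 'C(m + a, m - s) * 'C(m + b, s))%:R.
  rewrite coef_sum natr_sum; apply: eq_bigr => s _.
  have /monicP := jacobi_term_monic m s.
  by rewrite coefZ lead_coefE size_jacobi_term => ->; rewrite mulr1.
have P_m_neq0 : P`_m != 0.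
  by rewrite P_m pnatr_eq0 -lt0n big_ord_recl subn0 bin0 muln1 ltn_addr // bin_gt0 leq_addr.
apply/eqP; rewrite eqn_leq size_P ltnNge; apply: contra P_m_neq0.
by move=> /leq_sizeP/(_ m (leqnn m)) ->.
Qed.

Lemma jacobi_at1 a b m : (jacobi R a b m).[1] = 'C(m + a, m)%:R.
Proof.
rewrite /jacobi horner_sum big_ord_recl big1 ?addr0 => [|s _].
  rewrite !hornerE /=.
  have -> : (2^-1 : R) * (1 + 1) = 1 by field.
  by rewrite subn0 bin0 muln1 expr1n !mulr1.
by rewrite !hornerE /= subrr mulr0 expr0n mulr0 mul0r.
Qed.

Lemma jacobi_atN1 a b m : (jacobi R a b m).[-1] = (-1) ^+ m * 'C(m + b, m)%:R.
Proof.
rewrite /jacobi horner_sum big_ord_recr big1 ?add0r => [|s _].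
  rewrite !hornerE /=.
  have -> : (2^-1 : R) * (-1 - 1) = -1 by field.
  by rewrite subnn bin0 mul1n addNr mulr0 expr0 mulr1 mulrC.
by rewrite !hornerE /= addNr mulr0 expr0n subn_eq0 leqNgt ltn_ord mulr0.
Qed.

End Jacobi.

Section Restrictions.
Variable R : realFieldType.

Lemma homogZ k (p : {poly R}) (s a b : R) :
  homog k p (s * a) (s * b) = s ^+ k * homog k p a b.
Proof.
rewrite /homog mulr_sumr; apply: eq_bigr => j _.
have -> : s ^+ k = s ^+ j * s ^+ (k - j) by rewrite -exprD subnKC // -ltnS.
rewrite -mulrBr -mulrDr !exprMn; ring.
Qed.

Lemma homog_sum1 k (p : {poly R}) (a b : R) :
  (size p <= k.+1)%N -> a + b = 1 -> homog k p a b = p.[a - b].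
Proof.
move=> size_p ab1; rewrite /homog (horner_coef_wide _ size_p).
by apply: eq_bigr => j _; rewrite ab1 expr1n mulr1.
Qed.

Lemma bnk_ray n k (s : R) {a b : R} : a + b = 1 ->
  bnk n k (s * a) (s * b) =
  (jacobi R 0 (2 * k + 1) (n - k)).[2 * s - 1] * s ^+ k * (legendre R k).[a - b].
Proof.
move=> ab1; rewrite /bnk homogZ homog_sum1 ?size_jacobi // -mulrDr ab1 mulr1.
by rewrite mulrA.
Qed.

Definition ray_poly (n k : nat) (e : R) : {poly R} :=
  'X^k * ((legendre R k).[e] *: (jacobi R 0 (2 * k + 1) (n - k) \Po (2%:P * 'X + (-1)%:P))).

Definition edge_poly (n : nat) (Z : edge) (k : nat) : {poly R} :=
  match Z with
  | EI => ray_poly n k 1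
  | EII => ray_poly n k (-1)
  | EIII => legendre R k \Po ((-2)%:P * 'X + 1%:P)
  end.

Lemma size_legendre_comp k : size (legendre R k \Po ((-2)%:P * 'X + 1%:P)) = k.+1.
Proof. by rewrite size_comp_poly2 ?size_CMXaddC ?oppr_eq0 ?pnatr_eq0 // size_jacobi. Qed.

Lemma horner_ray_poly n k e t :
  (ray_poly n k e).[t] = (jacobi R 0 (2 * k + 1) (n - k)).[2 * t - 1] * t ^+ k * (legendre R k).[e].
Proof. by rewrite hornerM hornerXn hornerZ horner_comp !hornerE /= mulrC mulrA. Qed.

Lemma gamma_bnk n Z k t : gamma Z (bnk n k) t = (edge_poly n Z k).[t].
Proof.
case: Z => /=.
- by have := bnk_ray n k t (addr0 1); rewrite mulr1 mulr0 subr0 horner_ray_poly.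
- by have := bnk_ray n k t (add0r 1); rewrite mulr0 mulr1 sub0r horner_ray_poly.
have := bnk_ray n k 1 (subrK t 1); rewrite !mul1r => ->.
rewrite horner_comp !hornerE.
have -> : (2 - 1 : R) = 1 by ring.
rewrite jacobi_at1 addn0 binn expr1n !mul1r.
by congr (_.[_]); ring.
Qed.

Lemma size_ray_poly n k e : (k <= n)%N -> (size (ray_poly n k e) <= n.+1)%N.
Proof.
move=> le_kn; apply: leq_trans (size_mul_leq _ _) _.
have -> : n.+1 = (k + (n - k).+1)%N by rewrite addnS subnKC.
rewrite size_polyXn addSn leq_add2l (leq_trans (size_scale_leq _ _)) //.
by rewrite size_comp_poly2 ?size_CMXaddC ?pnatr_eq0 // size_jacobi.
Qed.

Lemma size_edge_poly n Z k : (k <= n)%N -> (size (edge_poly n Z k) <= n.+1)%N.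
Proof.
by case: Z => le_kn; rewrite /= ?size_ray_poly ?size_legendre_comp.
Qed.

Lemma coefmx_ray_poly_unit n e : (forall k, (legendre R k).[e] != 0) ->
  coefmx (fun k : 'I_n.+1 => ray_poly n k e) \in unitmx.
Proof.
move=> legendre_e; apply: coefmx_unit_Xn => k.
rewrite coefZ -horner_coef0 horner_comp !hornerE /= jacobi_atN1.
by rewrite !mulf_neq0 ?signr_eq0 ?pnatr_eq0 -?lt0n ?bin_gt0 ?leq_addr.
Qed.

Lemma coefmx_edge_poly_unit n Z : coefmx (fun k : 'I_n.+1 => edge_poly n Z k) \in unitmx.
Proof.
case: Z; rewrite /=.
- by apply: coefmx_ray_poly_unit => k; rewrite jacobi_at1 addn0 binn oner_eq0.
- apply: coefmx_ray_poly_unit => k.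
  by rewrite jacobi_atN1 addn0 binn mulr1 signr_eq0.
by apply: coefmx_unit_size => k; rewrite size_legendre_comp.
Qed.

End Restrictions.

Theorem lemma12 (R : realFieldType) (n : nat) (Z : edge) :
  @is_basis_Pn01 R n (fun k : 'I_n.+1 => gamma Z (@bnk R n k)).
Proof.
apply: (@is_basis_Pn01_coefmx R n _ (fun k => edge_poly R n Z k)).
- by move=> k; rewrite size_edge_poly // -ltnS.
- by move=> k t _; rewrite gamma_bnk.
- exact: coefmx_edge_poly_unit.
Qed.
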